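(* Let $(\mathbb{X},\mathcal{X},\mu,T)$ be a non-atomic probability space with $T$ invertible, measure-preserving and ergodic, and let $(l(n))_{n\ge1}$ be an increasing sequence of positive integers. Then there exists a measurable function $v:\mathbb{X}\to[0,\infty)$ (finite a.e.) such that $\limsup_n \frac{1}{l(n)}\,v\circ T^n=+\infty$ $\mu$-a.e. *)

From HB Require Import structures.
From mathcomp Require Import all_boot all_order all_algebra.
From mathcomp Require Import all_classical all_reals all_analysis.
Set Implicit Arguments. Unset Strict Implicit. Unset Printing Implicit Defensive.
Import Order.TTheory GRing.Theory Num.Theory.
Local Open Scope classical_set_scope.
Local Open Scope ring_scope.

Definition non_atomic d (X : measurableType d) (R : realType)
  (mu : set X -> \bar R) : Prop :=
  forall A, measurable A -> (0 < mu A)%E ->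
    exists B, [/\ measurable B, B `<=` A & (0 < mu B < mu A)%E].

Definition invertible_mt d (X : measurableType d) (T : X -> X) : Prop :=
  measurable_fun setT T /\
  exists Tinv : X -> X,
    [/\ measurable_fun setT Tinv, cancel T Tinv & cancel Tinv T].

Definition measure_preserving d (X : measurableType d) (R : realType)
  (mu : set X -> \bar R) (T : X -> X) : Prop :=
  measurable_fun setT T /\
  forall A, measurable A -> mu (T @^-1` A) = mu A.

Definition ergodic d (X : measurableType d) (R : realType)
  (mu : set X -> \bar R) (T : X -> X) : Prop :=
  forall A, measurable A -> T @^-1` A = A -> mu A = 0%E \/ mu A = 1%E.

From HB Require Import structures.
From mathcomp Require Import all_boot all_order all_algebra.
From mathcomp Require Import all_classical all_reals all_analysis.
From mathcomp Require Import lra.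
Import Order.TTheory GRing.Theory Num.Theory.
Import numFieldNormedType.Exports.
Local Open Scope classical_set_scope.
Local Open Scope ring_scope.

(* Non-atomicity yields disjoint sets [A_k] of positive measure. By ergodicity
   almost every point visits [A_k] after time [k], so for some [N_k] the set
   [G_k] of points visiting [A_k] at a time [n] with [k < n < N_k] has measure
   [> 1 - 1/(k+1)]. Let [v] be [(k+1) l(N_k)] on [A_k] and [0] elsewhere: for
   [x] in [G_k] we get [v (T^n x) / l n >= k+1] because [l n <= l N_k]. Almost
   every point lies in infinitely many [G_k], so the limsup is infinite. *)

Section visits.
Context {X : Type} (T : X -> X) (A : set X).

Definition visits_from (m : nat) : set X :=
  \bigcup_(n in [set n | (m <= n)%N]) iter n T @^-1` A.

Definition visits_between (m N : nat) : set X :=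
  \bigcup_(n in [set n | (m <= n < N)%N]) iter n T @^-1` A.

Lemma preimage_visits_from m : T @^-1` visits_from m = visits_from m.+1.
Proof.
apply/seteqP; split => x /=.
  by move=> [n /= mn hn]; exists n.+1 => //; rewrite /preimage /= -iterS iterSr.
move=> [[|n] //= mn hn]; exists n => //.
by rewrite /preimage /= -iterSr iterS.
Qed.

Lemma nonincreasing_visits_from : nonincreasing_seq visits_from.
Proof.
move=> m p mp; apply/subsetPset => x [n /= pn hn].
by exists n => //=; apply: leq_trans pn.
Qed.

Lemma nondecreasing_visits_between m : nondecreasing_seq (visits_between m).
Proof.
move=> N P NP; apply/subsetPset => x [n /= /andP[mn nN] hn].
by exists n => //=; rewrite mn (leq_trans nN).
Qed.

Lemma bigcup_visits_between m : \bigcup_N visits_between m N = visits_from m.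
Proof.
apply/seteqP; split => x.
  by move=> [N _ [n /= /andP[mn _] hn]]; exists n.
by move=> [n /= mn hn]; exists n.+1 => //; exists n => //=; rewrite mn ltnSn.
Qed.

Lemma preimage_bigcap_visits_from :
  T @^-1` (\bigcap_m visits_from m) = \bigcap_m visits_from m.
Proof.
rewrite preimage_bigcap; apply/seteqP; split => x /= h m _.
  have := nonincreasing_visits_from _ _ (leqnSn m).
  by move=> /subsetPset; apply; rewrite -preimage_visits_from; exact: h.
by rewrite preimage_visits_from; exact: h.
Qed.

End visits.

Section measurable_visits.
Context {d} {X : measurableType d} {T : X -> X}.
Hypothesis mT : measurable_fun setT T.

Lemma measurable_fun_iter n : measurable_fun setT (iter n T).
Proof.
elim: n => [|n IH] /=; first exact: measurable_id.
exact: measurableT_comp mT IH.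
Qed.

Lemma measurable_preimage_iter n A :
  measurable A -> measurable (iter n T @^-1` A).
Proof. by move=> mA; rewrite -[_ @^-1` _]setTI; exact: measurable_fun_iter. Qed.

Lemma measurable_visits_from A m :
  measurable A -> measurable (visits_from T A m).
Proof.
by move=> mA; apply: bigcup_measurable => n _; exact: measurable_preimage_iter.
Qed.

Lemma measurable_visits_between A m N :
  measurable A -> measurable (visits_between T A m N).
Proof.
by move=> mA; apply: bigcup_measurable => n _; exact: measurable_preimage_iter.
Qed.

End measurable_visits.

Section ergodic_visits.
Context {d} {X : measurableType d} {R : realType} {mu : probability X R}
  {T : X -> X}.
Hypotheses (mpT : measure_preserving mu T) (ergT : ergodic mu T).
Context {A : set X}.
Hypotheses (mA : measurable A) (A_gt0 : (0 < mu A)%E).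

Let mT : measurable_fun setT T := mpT.1.

Lemma measure_visits_from_shift m :
  mu (visits_from T A m) = mu (visits_from T A 0).
Proof.
elim: m => // m IH; rewrite -preimage_visits_from mpT.2 //.
exact: measurable_visits_from.
Qed.

(* The points visiting [A] infinitely often form a [T]-invariant set, of
   measure [mu (visits_from T A 0) >= mu A > 0]; ergodicity makes it full. *)
Lemma measure_visits_from m : mu (visits_from T A m) = 1%E.
Proof.
have mV k := measurable_visits_from mT A k mA.
have mI : measurable (\bigcap_k visits_from T A k) by exact: bigcap_measurable.
have muI : mu (\bigcap_k visits_from T A k) = mu (visits_from T A 0).
  have := nonincreasing_cvg_mu (mu := mu) _ mV mI
    (nonincreasing_visits_from T A).
  rewrite (_ : mu \o _ = cst (mu (visits_from T A 0))); last first.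
    by apply: funext => k /=; exact: measure_visits_from_shift.
  move=> /(_ _)/cvg_lim <-; rewrite ?lim_cst //.
  by rewrite (le_lt_trans (probability_le1 _ _)) ?ltry.
have V0_gt0 : (0 < mu (visits_from T A 0))%E.
  apply: (lt_le_trans A_gt0); apply: le_measure; rewrite ?inE //.
  by move=> x Ax; exists 0%N.
rewrite measure_visits_from_shift -muI.
case: (ergT _ mI (preimage_bigcap_visits_from T A)) => // I0.
by move: V0_gt0; rewrite -muI I0 ltxx.
Qed.

Lemma measure_setC_visits_between_lt m (e : R) : 0 < e ->
  exists N, (mu (~` visits_between T A m N) < e%:E)%E.
Proof.
move=> e_gt0; have mV N := measurable_visits_between mT A m N mA.
have ndmu : nondecreasing_seq (mu \o visits_between T A m).
  move=> N P NP; apply: le_measure; rewrite ?inE //.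
  by apply/subsetPset; exact: nondecreasing_visits_between.
have cvg1 : (mu \o visits_between T A m) @ \oo --> 1%E.
  rewrite -(measure_visits_from m) -bigcup_visits_between.
  apply: nondecreasing_cvg_mu => //; last exact: nondecreasing_visits_between.
  by rewrite bigcup_visits_between; exact: measurable_visits_from.
have sup1 : ereal_sup (range (mu \o visits_between T A m)) = 1%E.
  exact: cvg_unique (ereal_nondecreasing_cvgn ndmu) cvg1.
have : (1 - e%:E < ereal_sup (range (mu \o visits_between T A m)))%E.
  by rewrite sup1 -EFinB lte_fin ltrBlDr ltrDl.
move=> /ereal_sup_gt [_ [N _ <-] ltN]; exists N.
have VN_fin : mu (visits_between T A m N) \is a fin_num.
  by rewrite ge0_fin_numE // (le_lt_trans (probability_le1 _ _)) ?ltry.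
move: ltN => /=; rewrite probability_setC // -(fineK VN_fin) -EFinB !lte_fin.
lra.
Qed.

End ergodic_visits.

(* Repeatedly split off a proper piece of positive measure,
   [C_(k+1) = C_k \ A_k] with [A_k] a piece of [C_k]; the pieces are disjoint
   since [A_j] is removed from every later [C_k]. *)
Lemma non_atomic_trivIset {d} {X : measurableType d} {R : realType}
    {mu : probability X R} :
  non_atomic mu -> exists A : (set X)^nat,
    [/\ forall k, measurable (A k), forall k, (0 < mu (A k))%E &
         trivIset setT A].
Proof.
move=> na.
have piece_ex S : exists B, measurable S -> (0 < mu S)%E ->
    [/\ measurable B, B `<=` S & (0 < mu B < mu S)%E].
  have [[mS S_gt0]|nS] := pselect (measurable S /\ (0 < mu S)%E).
    by have [B hB] := na S mS S_gt0; exists B.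
  by exists set0 => mS S_gt0; exfalso; exact: nS.
have [piece piece_spec] := choice piece_ex.
pose C k := iter k (fun S => S `\` piece S) setT.
have C_spec k : measurable (C k) /\ (0 < mu (C k))%E.
  elim: k => [|k [mC C_gt0]] /=; first by rewrite probability_setT.
  have [mP PC /andP[P_gt0 P_lt]] := piece_spec _ mC C_gt0.
  split; first exact: measurableD.
  rewrite measureD // ?(le_lt_trans (probability_le1 _ _)) ?ltry //.
  by rewrite setIidr // sube_gt0.
have C_decr j k : (j <= k)%N -> C k `<=` C j.
  by move=> /subnK <-; elim: (k - j)%N => [|i IH] //= x [/IH].
have piece_C k := piece_spec _ (C_spec k).1 (C_spec k).2.
exists (fun k => piece (C k)); split.
- by move=> k; have [] := piece_C k.
- by move=> k; have [_ _ /andP[]] := piece_C k.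
have disj j k x : (j < k)%N -> piece (C j) x -> ~ piece (C k) x.
  move=> jk xj xk; have [_ /(_ x xk) Ckx _] := piece_C k.
  by have /= [] := C_decr _ _ jk x Ckx.
move=> j k _ _ [x [xj xk]]; case: (ltngtP j k) => // jk.
  by case: (disj _ _ _ jk xj xk).
by case: (disj _ _ _ jk xk xj).
Qed.

Section piecewise_constant.
Context {d} {X : measurableType d} {R : realType} (A : (set X)^nat) (c : R^nat).

Definition piecewise_cst (x : X) : R :=
  limn (fun n => \sum_(k < n) c k * \1_(A k) x).

Hypothesis tA : trivIset setT A.

Lemma sum_indic_mem k x n : A k x -> (k < n)%N ->
  \sum_(i < n) c i * \1_(A i) x = c k.
Proof.
move=> Akx kn; rewrite (bigD1 (Ordinal kn)) //= big1 ?addr0.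
  by rewrite indicE mem_set // mulr1.
move=> j /eqP jk; rewrite indicE memNset ?mulr0 // => Ajx; apply: jk.
by apply: val_inj; apply: tA => //; exists x.
Qed.

Lemma sum_indic_out x n : (forall k, ~ A k x) ->
  \sum_(i < n) c i * \1_(A i) x = 0.
Proof. by move=> nA; rewrite big1 // => k _; rewrite indicE memNset ?mulr0. Qed.

Lemma piecewise_cstE k x : A k x -> piecewise_cst x = c k.
Proof.
move=> Akx; apply: norm_lim_near_cst.
by exists k.+1 => // n; exact: sum_indic_mem.
Qed.

Lemma piecewise_cst_out x : (forall k, ~ A k x) -> piecewise_cst x = 0.
Proof.
by move=> nA; apply: norm_lim_near_cst; apply: nearW => n; exact: sum_indic_out.
Qed.

Lemma piecewise_cst_ge0 x : (forall k, 0 <= c k) -> 0 <= piecewise_cst x.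
Proof.
move=> c_ge0; have [[k Akx]|nA] := pselect (exists k, A k x).
  by rewrite (piecewise_cstE _ _ Akx).
by rewrite piecewise_cst_out // => k Akx; apply: nA; exists k.
Qed.

Lemma measurable_piecewise_cst :
  (forall k, measurable (A k)) -> measurable_fun setT piecewise_cst.
Proof.
move=> mA; apply: (measurable_realfun.measurable_fun_cvg
  (h := fun n x => \sum_(k < n) c k * \1_(A k) x)).
  move=> n; apply: measurable_sum => k.
  exact/measurable_realfun.measurable_funM/measurable_realfun.measurable_indic.
move=> x _; have [[k Akx]|nA] := pselect (exists k, A k x).
  rewrite (piecewise_cstE _ _ Akx); apply: cvg_near_cst.
  by exists k.+1 => // n; exact: sum_indic_mem.
have {}nA k : ~ A k x by move=> Akx; apply: nA; exists k.
rewrite piecewise_cst_out //.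
by apply: cvg_near_cst; apply: nearW => n; exact: sum_indic_out.
Qed.

End piecewise_constant.

Lemma ae_frequently {d} {X : measurableType d} {R : realType}
    (mu : {measure set X -> \bar R}) (G : (set X)^nat) :
  (forall k, measurable (G k)) ->
  (forall m (e : R), 0 < e ->
    exists2 k, (m <= k)%N & (mu (~` G k) <= e%:E)%E) ->
  {ae mu, forall x, forall m, exists2 k, (m <= k)%N & G k x}.
Proof.
move=> mG G_small.
pose never_from m := \bigcap_(k in [set k | (m <= k)%N]) ~` G k.
have m_never m : measurable (never_from m).
  by apply: bigcap_measurableType => k _; exact: measurableC.
have never0 m : mu (never_from m) = 0%E.
  apply/eqP; rewrite eq_le measure_ge0 andbT; apply/lee_addgt0Pr => e e_gt0.
  have [k mk Gk_small] := G_small m e e_gt0; rewrite add0e.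
  apply: le_trans Gk_small; apply: le_measure; rewrite ?inE //.
    exact: measurableC.
  by move=> x; apply.
apply: (@negligibleS _ _ _ mu (\bigcup_m never_from m)).
  move=> x /= not_freq; apply: contrapT => nB; apply: not_freq => m.
  apply: contrapT => nk; apply: nB; exists m => // k mk Gkx.
  by apply: nk; exists k.
by apply: negligible_bigcup => m; exists (never_from m); split.
Qed.

Lemma limn_esup_eqy (R : realType) (u : (\bar R)^nat) :
  (forall (M : R) m, exists2 n, (m <= n)%N & (M%:E <= u n)%E) ->
  limn_esup u = +oo%E.
Proof.
move=> u_large; rewrite limn_esup_lim (_ : esups u = cst +oo%E) ?lim_cst //.
apply: funext => m; apply: eq_infty => M; have [n mn Mn] := u_large M m.
by apply: le_trans Mn _; apply: ereal_sup_ubound; exists n.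
Qed.

Lemma ler_natr_bound {R : archiRealDomainType} (x : R) k :
  (Num.bound `|x| <= k)%N -> x <= k%:R.
Proof.
move=> bk; apply: le_trans (ler_norm x) _; apply: ltW.
by apply: lt_le_trans (archi_boundP (normr_ge0 x)) _; rewrite ler_nat.
Qed.

Lemma lt_inv_succ_frequently_le {R : realType} (a : (\bar R)^nat) :
  (forall k, (a k < ((k.+1)%:R^-1)%:E)%E) ->
  forall m (e : R), 0 < e -> exists2 k, (m <= k)%N & (a k <= e%:E)%E.
Proof.
move=> a_lt m e e_gt0; exists (maxn m (Num.bound `|e^-1|)).
  exact: leq_maxl.
apply: le_trans (ltW (a_lt _)) _; rewrite lee_fin invf_ple ?posrE ?ltr0n //.
by apply: le_trans (ler_natr_bound _ _ (leq_maxr _ _)) _; rewrite ler_nat.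
Qed.

Definition ratio_weight {R : realType} (l N : nat -> nat) (k : nat) : R :=
  (k.+1)%:R * (l (N k))%:R.

Section large_ratio.
Context {d} {X : measurableType d} {R : realType} {T : X -> X} {l : nat -> nat}.
Hypotheses (l_gt0 : forall n, (0 < n)%N -> (0 < l n)%N)
  (l_incr : forall m n, (0 < m)%N -> (m < n)%N -> (l m < l n)%N).
Context {A : (set X)^nat} {N : nat -> nat}.
Hypothesis tA : trivIset setT A.

Lemma visits_between_ratio {k x} : visits_between T (A k) k.+1 (N k) x ->
  exists2 n, (k < n)%N &
    (k.+1)%:R <= piecewise_cst A (ratio_weight l N) (iter n T x) / (l n)%:R
    :> R.
Proof.
move=> [n /= /andP[kn nN] Akn]; exists n => //.
have n_gt0 : (0 < n)%N by apply: leq_trans kn.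
have ln_gt0 : 0 < (l n)%:R :> R by rewrite ltr0n l_gt0.
rewrite (piecewise_cstE _ _ tA _ _ Akn) ler_pdivlMr // ler_wpM2l // ler_nat.
exact/ltnW/l_incr.
Qed.

End large_ratio.

Theorem lemma3 (d : measure_display) (X : measurableType d) (R : realType)
  (mu : probability X R) (T : X -> X) (l : nat -> nat) :
  non_atomic mu -> invertible_mt T -> measure_preserving mu T -> ergodic mu T ->
  (forall n, (0 < n)%N -> (0 < l n)%N) ->
  (forall m n, (0 < m)%N -> (m < n)%N -> (l m < l n)%N) ->
  exists v : X -> R,
    [/\ measurable_fun setT v, (forall x, 0 <= v x) &
      {ae mu, forall x,
        limn_esup (fun n => ((v (iter n T x)) / (l n)%:R)%:E) = +oo%E}].
Proof.
move=> na _ mpT ergT l_gt0 l_incr.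
have [A [mA A_gt0 tA]] := non_atomic_trivIset na.
have N_ex k : exists N,
    (mu (~` visits_between T (A k) k.+1 N) < ((k.+1)%:R^-1)%:E)%E.
  by apply: (measure_setC_visits_between_lt mpT ergT (mA k) (A_gt0 k));
    rewrite invr_gt0.
have [N N_spec] := choice N_ex.
pose G k := visits_between T (A k) k.+1 (N k).
have G_small := lt_inv_succ_frequently_le (fun k => mu (~` G k)) N_spec.
exists (piecewise_cst A (ratio_weight l N)); split.
- exact: measurable_piecewise_cst.
- by move=> x; apply: piecewise_cst_ge0 => // k; rewrite mulr_ge0.
have mG k : measurable (G k).
  exact: measurable_visits_between mpT.1 _ _ _ (mA k).
move: (ae_frequently mu G mG G_small); apply: filterS => x G_often.
apply: limn_esup_eqy => M m.
have [k Mk Gkx] := G_often (maxn m (Num.bound `|M|)).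
have [n kn ratio] := visits_between_ratio (R := R) l_gt0 l_incr tA Gkx.
exists n; first exact: leq_trans (leq_maxl _ _) (leq_trans Mk (ltnW kn)).
rewrite lee_fin; apply: le_trans ratio.
apply: le_trans (ler_natr_bound _ _ (leq_trans (leq_maxr _ _) Mk)) _.
by rewrite ler_nat.
Qed.
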